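(* Let $(\mathcal{C},\mathcal{B},Q,S)$ be an STV election, counted by the procedure described in the context. Let $w\in\mathcal{C}$ and $O\subseteq\mathcal{C}$, and suppose that $L_{\mathrm{basic}}(w)>U_{\mathrm{comp}}(o,w)$ (the assertion $\mathsf{AG}(w,o)$) holds for every $o\in O$. Then $L_{\mathrm{elim}}(w,O)$ is a lower bound on the tally of $w$ at any point of the count at which $w$ could be eliminated.
   Context: An STV election is a tuple $(\mathcal{C},\mathcal{B},Q,S)$ where $\mathcal{C}$ is a finite set of candidates, $\mathcal{B}$ is a multiset of ballots (each ballot is a finite sequence of distinct candidates, in order of preference, most preferred first, not necessarily containing all candidates), $S$ is the number of seats, and $Q=\lfloor |\mathcal{B}|/(S+1)\rfloor+1$ is the quota. For a sequence $\pi$, $\mathrm{first}(\pi)$ is its first element, and for a set $X$ of candidates, $\sigma_X(\pi)$ is the subsequence of $\pi$ consisting of the elements of $X$, in their original order. Counting: every ballot starts with value $1$ and is placed in the pile of its first-ranked candidate; a candidate's tally is the total value of the ballots in its pile. A candidate is eligible if neither eliminated nor seated. In each round every eligible candidate with tally at least $Q$ is seated (gets a quota), and the ballots in its pile get a reduced transfer value (e.g. unweighted Gregory: $(V_c-Q)/|\mathcal{B}_c|$, with $V_c$ the total value and $|\mathcal{B}_c|$ the number of ballots in its pile) and move to the next-ranked eligible candidate on each ballot (or are exhausted). If no candidate reaches a quota, the eligible candidate with smallest tally is eliminated and its ballots move at their current value to their next-ranked eligible candidate (or are exhausted). Counting stops when all $S$ seats are filled or the number of eligible candidates equals the number of unfilled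 seats, in which case all remaining eligible candidates are seated. Definitions (counts with multiplicity): $L_{\mathrm{basic}}(c)=|\{\beta\in\mathcal{B}:\mathrm{first}(\beta)=c\}|$; $U_{\mathrm{comp}}(c,c')=|\{\beta\in\mathcal{B}:\mathrm{first}(\sigma_{\{c,c'\}}(\beta))=c\}|$; $L_{\mathrm{elim}}(w,O)=|\{\beta\in\mathcal{B}:\mathrm{first}(\sigma_{\mathcal{C}\setminus O}(\beta))=w\}|$. *)

From mathcomp Require Import all_boot all_order all_algebra.
Set Implicit Arguments. Unset Strict Implicit. Unset Printing Implicit Defensive.
Import Order.TTheory GRing.Theory Num.Theory.

Section STV.
Variable C : finType.
Variable B : seq (seq C).        (* the multiset of ballots, as a list (multiplicity = repetition) *)
Variable S : nat.

Definition valid_ballots : bool := all uniq B.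

Definition nB := size B.
Definition ballot (i : 'I_nB) : seq C := nth [::] B i.

Definition quota : nat := (nB %/ S.+1).+1.

Definition first (s : seq C) : option C := ohead s.
Definition sigma (X : pred C) (s : seq C) : seq C := [seq x <- s | X x].

Definition L_basic (c : C) : nat := count (fun b => first b == Some c) B.
Definition U_comp (c c' : C) : nat :=
  count (fun b => first (sigma (mem [:: c; c']) b) == Some c) B.
Definition L_elim (w : C) (O : {set C}) : nat :=
  count (fun b => first (sigma (fun x => x \notin O) b) == Some w) B.

Record state := State {
  elimd : C -> bool;
  seatd : C -> bool;
  pile  : 'I_nB -> option C;       (* pile the ballot currently sits in (None = exhausted) *)
  bval  : 'I_nB -> rat
}.

Definition eligible (st : state) (c : C) : bool := ~~ elimd st c && ~~ seatd st c.

Definition stv_tally (st : state) (c : C) : rat :=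
  \sum_(i < nB | pile st i == Some c) bval st i.

Definition pile_size (st : state) (c : C) : nat :=
  #|[set i : 'I_nB | pile st i == Some c]|.

Definition next_elig (elim seat : C -> bool) (b : seq C) (c : C) : option C :=
  ohead [seq x <- drop (index c b).+1 b | ~~ elim x && ~~ seat x].

Definition init_state : state :=
  State (fun _ => false) (fun _ => false) (fun i => ohead (ballot i)) (fun _ => 1%R).

Definition n_seated (st : state) : nat := #|[set c | seatd st c]|.
Definition n_eligible (st : state) : nat := #|[set c | eligible st c]|.

Definition stopped (st : state) : bool :=
  (S <= n_seated st) || (n_eligible st == S - n_seated st).

Definition reaches_quota (st : state) (c : C) : bool :=
  eligible st c && ((quota%:R : rat) <= stv_tally st c)%R.

(* a round in which every eligible candidate with stv_tally >= Q is seated;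
   unweighted Gregory transfer value (V_c - Q)/|B_c| *)
Definition seat_round (st : state) : state :=
  let E := reaches_quota st in
  let seat' := fun c => seatd st c || E c in
  State (elimd st) seat'
    (fun i => match pile st i with
              | Some c => if E c then next_elig (elimd st) seat' (ballot i) c
                          else Some c
              | None => None end)
    (fun i => match pile st i with
              | Some c => if E c then
                  ((stv_tally st c - quota%:R) / (pile_size st c)%:R)%R
                  else bval st i
              | None => bval st i end).

Definition elim_round (st : state) (e : C) : state :=
  let elim' := fun c => elimd st c || (c == e) in
  State elim' (seatd st)
    (fun i => match pile st i with
              | Some c => if c == e then next_elig elim' (seatd st) (ballot i) c
                          else Some c
              | None => None end)
    (bval st).

Definition can_be_eliminated (st : state) (e : C) : Prop :=
  ~~ stopped st /\
  (forall c, ~~ reaches_quota st c) /\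
  eligible st e /\
  (forall c, eligible st c -> (stv_tally st e <= stv_tally st c)%R).

Inductive step : state -> state -> Prop :=
| step_seat st : ~~ stopped st -> (exists c, reaches_quota st c) ->
    step st (seat_round st)
| step_elim st e : can_be_eliminated st e -> step st (elim_round st e).

Inductive reachable : state -> Prop :=
| reach_init : reachable init_state
| reach_step st st' : reachable st -> step st st' -> reachable st'.

End STV.

Arguments stv_tally [C] B st c.
Arguments reachable [C] B S _.
Arguments can_be_eliminated [C] B S st e.

(** Call a ballot an L_elim ballot if w is its first preference outside O.
  While w is eligible, every ballot sits with a candidate ranked no later than
  w on it, so an L_elim ballot sits with w or with some o in O.  The tally of
  such an o comes from ballots ranking o above w, each worth at most 1, so it
  is at most U_comp(o, w) < L_basic(w) <= tally(w).  Hence o never reaches a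
  quota while w does not, and an L_elim ballot keeps value 1 and is never
  exhausted as long as w is eligible.  When w may be eliminated its tally is
  minimal among eligible candidates, so no L_elim ballot can sit with any o in
  O: all of them are in w's pile, at full value. *)

From mathcomp Require Import all_boot all_order all_algebra.
From mathcomp Require Import lra.
Set Implicit Arguments. Unset Strict Implicit. Unset Printing Implicit Defensive.
Import Order.TTheory GRing.Theory Num.Theory.

Section SeqPositions.
Variable T : eqType.
Implicit Types (s : seq T) (P : pred T).

Lemma index_drop s k x : k <= index x s -> index x s = k + index x (drop k s).
Proof.
move=> le_k; have le_ks : k <= size s := leq_trans le_k (index_size x s).
have notin_take : x \notin take k s.
  by apply/negP => /[dup] /mem_take /in_take -> ; rewrite ltnNge le_k.
by rewrite -{1}(cat_take_drop k s) index_cat (negbTE notin_take) size_takel.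
Qed.

Lemma mem_drop_index s k x : x \in s -> k <= index x s -> x \in drop k s.
Proof.
move=> xs le_k; move: xs; rewrite -{1}(cat_take_drop k s) mem_cat.
by case/orP=> // /index_ltn; rewrite ltnNge le_k.
Qed.

Lemma index_mem_drop s k x : uniq s -> x \in drop k s -> k <= index x s.
Proof.
move=> us x_drop; have xs := mem_drop x_drop.
move: us; rewrite -{1}(cat_take_drop k s) cat_uniq => /and3P [_ /hasPn disj _].
by rewrite leqNgt -in_take //; exact: disj.
Qed.

Lemma index_lt_neq s x y : x \in s -> x != y ->
  index x s <= index y s -> index x s < index y s.
Proof.
move=> xs neq_xy; rewrite leq_eqVlt => /orP [/eqP eq_index|//].
have ys : y \in s by rewrite -index_mem -eq_index index_mem.
by move: neq_xy; rewrite -(nth_index x xs) eq_index nth_index ?eqxx.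
Qed.

Lemma ohead_filter_Some P s y : ohead (filter P s) = Some y ->
  [/\ y \in s, P y & forall z, z \in s -> P z -> index y s <= index z s].
Proof.
elim: s => [|a s IH] //=; case Pa: (P a) => /=.
  by case=> <-; split; rewrite ?mem_head // => z _ _; rewrite eqxx.
move=> /IH [ys Py first_y]; split; rewrite ?inE ?ys ?orbT //.
have neq_a z : P z -> (a == z) = false by move=> Pz; apply: contraFF Pa => /eqP ->.
move=> z; rewrite inE => /orP [/eqP -> |zs Pz]; first by rewrite Pa.
by rewrite neq_a // neq_a // ltnS first_y.
Qed.

Lemma ohead_filter_pair s x y : x \in s -> index x s <= index y s ->
  ohead [seq z <- s | z \in [:: x; y]] = Some x.
Proof.
elim: s => [|a s IH] //=; rewrite inE.
have [->|neq_ax] := eqVneq a x; first by rewrite mem_head.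
have [//|neq_ay] := eqVneq a y.
by rewrite !inE (negbTE neq_ax) (negbTE neq_ay) ltnS; exact: IH.
Qed.

Lemma ohead_filter_None P s : ohead (filter P s) = None -> {in s, forall z, ~~ P z}.
Proof. by move=> nil_filter; apply/hasPn; rewrite has_filter; case: filter nil_filter. Qed.

End SeqPositions.

Section NextEligible.
Variable C : finType.
Implicit Types (elim seat : C -> bool) (b : seq C).

Lemma next_elig_mem elim seat b c y : next_elig elim seat b c = Some y ->
  y \in b /\ ~~ elim y && ~~ seat y.
Proof. by case/ohead_filter_Some=> /mem_drop. Qed.

Lemma next_elig_after elim seat b c y : uniq b -> next_elig elim seat b c = Some y ->
  index c b < index y b.
Proof. by move=> ub /ohead_filter_Some [y_drop _ _]; exact: index_mem_drop y_drop. Qed.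

Lemma next_elig_first elim seat b c y z : uniq b -> next_elig elim seat b c = Some y ->
  ~~ elim z && ~~ seat z -> index c b < index z b -> index y b <= index z b.
Proof.
move=> ub next_y elig_z lt_cz; have [yb _] := next_elig_mem next_y.
have [zb|/memNindex ->] := boolP (z \in b); last by rewrite ltnW ?index_mem.
have lt_cy := next_elig_after ub next_y.
case/ohead_filter_Some: next_y => y_drop _ /(_ z (mem_drop_index zb lt_cz) elig_z).
by rewrite (index_drop lt_cy) (index_drop lt_cz) leq_add2l.
Qed.

Lemma next_elig_neq_None elim seat b c z : z \in b -> index c b < index z b ->
  ~~ elim z && ~~ seat z -> next_elig elim seat b c != None.
Proof.
move=> zb lt_cz elig_z; apply/eqP => /ohead_filter_None /(_ z).
by rewrite mem_drop_index // elig_z => /(_ isT).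
Qed.

End NextEligible.

Lemma transfer_value_unit (R : realFieldType) (q t s : R) :
  (0 <= q -> q <= t -> t <= s -> 0 <= (t - q) / s <= 1)%R.
Proof.
move=> q_ge0 le_qt le_ts; have [->|s_neq0] := eqVneq s 0%R.
  by rewrite invr0 mulr0 lexx ler01.
have s_gt0 : (0 < s)%R by rewrite lt_def s_neq0 (le_trans q_ge0 (le_trans le_qt le_ts)).
by rewrite divr_ge0 ?subr_ge0 ?(ltW s_gt0) //= ler_pdivrMr // mul1r; lra.
Qed.

Section Tallies.
Variables (C : finType) (B : seq (seq C)).
Implicit Types (st : state B) (c x w : C) (P : pred (seq C)).
Local Open Scope ring_scope.

Lemma natr_count_ballots P :
  (count P B)%:R = \sum_(i < nB B) (P (ballot i))%:R :> rat.
Proof.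
rewrite -sum1_count (big_nth [::]) big_mkord natr_sum big_mkcond /=.
by apply: eq_bigr => i _; case: (P _).
Qed.

Lemma count_le_stv_tally st P c : (forall i, 0 <= bval st i) ->
  (forall i, P (ballot i) -> pile st i = Some c /\ bval st i = 1) ->
  (count P B)%:R <= stv_tally B st c.
Proof.
move=> bval_ge0 P_at_c; rewrite natr_count_ballots /stv_tally [X in _ <= X]big_mkcond /=.
apply: ler_sum => i _; case Pi: (P _); first by have [-> ->] := P_at_c i Pi; rewrite eqxx.
by case: eqP.
Qed.

Lemma stv_tally_le_pile_size st c : (forall i, bval st i <= 1) ->
  stv_tally B st c <= (pile_size st c)%:R.
Proof.
move=> bval_le1; rewrite /pile_size -sum1_card natr_sum /stv_tally.
rewrite big_mkcond [X in _ <= X]big_mkcond /=.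
by apply: ler_sum => i _; rewrite inE; case: eqP.
Qed.

Lemma stv_tally_le_U_comp st x w : (forall i, bval st i <= 1) ->
  (forall i, pile st i = Some x ->
     x \in ballot i /\ (index x (ballot i) <= index w (ballot i))%N) ->
  stv_tally B st x <= (U_comp B x w)%:R.
Proof.
move=> bval_le1 x_before_w.
rewrite /U_comp natr_count_ballots /stv_tally [X in X <= _]big_mkcond /=.
apply: ler_sum => i _; case: eqP => [pile_x|_]; last by rewrite ler0n.
have [xb le_xw] := x_before_w i pile_x.
by rewrite /first /sigma ohead_filter_pair ?eqxx.
Qed.

Lemma L_basic_le_U_comp c c' : (L_basic B c <= U_comp B c c')%N.
Proof. by apply: sub_count => -[|a b] //= /eqP [->]; rewrite /first /sigma /= mem_head. Qed.

Lemma ballot_uniq : valid_ballots B -> forall i : 'I_(nB B), uniq (ballot i).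
Proof. by move=> valid i; apply: (all_nthP [::] valid); exact: ltn_ord. Qed.

End Tallies.

Section LElimBound.
Variables (C : finType) (B : seq (seq C)) (S : nat) (w : C) (O : {set C}).
Hypothesis valid : valid_ballots B.
Hypothesis AG : forall o, o \in O -> (U_comp B o w < L_basic B w)%N.
Local Open Scope ring_scope.

Definition Lelim_ballot (b : seq C) : bool := first (sigma (fun x => x \notin O) b) == Some w.

Lemma Lelim_ballot_prefix b x : Lelim_ballot b -> x \in b ->
  (index x b <= index w b)%N -> x = w \/ x \in O.
Proof.
move=> /eqP /ohead_filter_Some [wb _ first_w] xb le_xw.
have [xO|xNO] := boolP (x \in O); [by right | left].
by apply: (index_inj x xb wb); apply/eqP; rewrite eqn_leq le_xw first_w.
Qed.

Lemma w_notin_O : w \notin O.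
Proof.
apply/negP => wO; have := AG wO.
by rewrite ltnNge L_basic_le_U_comp.
Qed.

Record stv_inv (st : state B) : Prop := {
  bval_ge0 : forall i, 0 <= bval st i;
  bval_le1 : forall i, bval st i <= 1;
  pile_eligible : forall i c, pile st i = Some c -> eligible st c;
  pile_mem : forall i c, pile st i = Some c -> c \in ballot i;
  pile_before_w : eligible st w -> forall i c, pile st i = Some c ->
    (index c (ballot i) <= index w (ballot i))%N;
  Lelim_ballot_intact : eligible st w -> forall i, Lelim_ballot (ballot i) ->
    bval st i = 1 /\ pile st i != None
}.

Section Invariant.
Variable st : state B.
Hypotheses (inv : stv_inv st) (elig_w : eligible st w).

Lemma L_basic_le_stv_tally : (L_basic B w)%:R <= stv_tally B st w.
Proof.
apply: count_le_stv_tally (bval_ge0 inv) _ => i.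
case E: (ballot i) => [|a l] //= /eqP [eq_aw]; subst a.
have Lelim_i : Lelim_ballot (ballot i).
  by rewrite E /Lelim_ballot /sigma /= w_notin_O.
have [-> pile_i] := Lelim_ballot_intact inv elig_w Lelim_i; split => //.
case P: (pile st i) pile_i => [x|//] _; have := pile_before_w inv elig_w P.
by rewrite E /= eqxx; case: eqP => [->|].
Qed.

Lemma stv_tally_lt_w x : x \in O -> stv_tally B st x < stv_tally B st w.
Proof.
move=> xO; apply: le_lt_trans (stv_tally_le_U_comp (w := w) (bval_le1 inv) _) _.
  by move=> i /[dup] /(pile_mem inv) xb /(pile_before_w inv elig_w).
by apply: lt_le_trans L_basic_le_stv_tally; rewrite ltr_nat AG.
Qed.

Lemma Lelim_ballot_pile i : Lelim_ballot (ballot i) ->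
  exists2 x, pile st i = Some x & x = w \/ stv_tally B st x < stv_tally B st w.
Proof.
move=> Lelim_i; have [_] := Lelim_ballot_intact inv elig_w Lelim_i.
case P: (pile st i) => [x|//] _; exists x => //.
have [|xO] := Lelim_ballot_prefix Lelim_i (pile_mem inv P) (pile_before_w inv elig_w P).
  by left.
by right; exact: stv_tally_lt_w.
Qed.

Lemma pile_index_lt_w i c : pile st i = Some c -> c != w ->
  (index c (ballot i) < index w (ballot i))%N.
Proof. by move=> P neq_cw; apply: index_lt_neq (pile_mem inv P) neq_cw (pile_before_w inv elig_w P). Qed.

End Invariant.

Lemma stv_inv_init : stv_inv (init_state B).
Proof.
constructor=> //= [i c|_ i c|_ i]; case: (ballot i) => //= [a l].
- by move=> [<-]; exact: mem_head.
- by move=> [<-]; rewrite eqxx.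
Qed.

Lemma stv_inv_seat_round st : stv_inv st -> stv_inv (seat_round S st).
Proof.
move=> inv; rewrite /seat_round; set E := reaches_quota S st.
have transfer_unit c : E c ->
    0 <= (stv_tally B st c - (quota B S)%:R) / (pile_size st c)%:R <= 1.
  case/andP=> _ quota_c; apply: transfer_value_unit (ler0n _ _) quota_c _.
  exact: stv_tally_le_pile_size (bval_le1 inv).
have elig_old c : ~~ elimd st c && ~~ (seatd st c || E c) -> eligible st c /\ ~~ E c.
  by rewrite negb_or /eligible => /and3P [-> -> ->].
constructor=> [i|i|i y|i y|elig'_w i y|elig'_w i Lelim_i] /=.
- case P: (pile st i) => [c|]; last exact: bval_ge0.
  by case: ifP => Ec; [case/andP: (transfer_unit c Ec) | exact: bval_ge0].
- case P: (pile st i) => [c|]; last exact: bval_le1.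
  by case: ifP => Ec; [case/andP: (transfer_unit c Ec) | exact: bval_le1].
- case P: (pile st i) => [c|] //; case: ifP => Ec; first by case/next_elig_mem.
  by case=> <-; rewrite /eligible /= Ec orbF; exact: (pile_eligible inv P).
- case P: (pile st i) => [c|] //; case: ifP => Ec; first by case/next_elig_mem.
  by case=> <-; exact: (pile_mem inv P).
- have [elig_w NEw] := elig_old w elig'_w.
  case P: (pile st i) => [c|] //; case: ifP => Ec; last first.
    by case=> <-; exact: (pile_before_w inv elig_w P).
  have lt_cw : (index c (ballot i) < index w (ballot i))%N.
    by apply: (pile_index_lt_w inv elig_w P); apply: contraTneq Ec => ->.
  by move/next_elig_first; apply=> //; exact: ballot_uniq.
- have [elig_w NEw] := elig_old w elig'_w.
  have [bval_1 _] := Lelim_ballot_intact inv elig_w Lelim_i.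
  have [x P x_w_or_lt] := Lelim_ballot_pile inv elig_w Lelim_i; rewrite P.
  suff -> : E x = false by [].
  (* if x reached a quota, so would w, which then would not stay eligible *)
  apply: contraNF NEw; case: x_w_or_lt => [-> //|lt_xw /andP [_ quota_x]].
  by rewrite /E /reaches_quota elig_w (le_trans quota_x (ltW lt_xw)).
Qed.

Lemma stv_inv_elim_round st e : stv_inv st -> stv_inv (elim_round st e).
Proof.
move=> inv; rewrite /elim_round.
have elig_old c : ~~ (elimd st c || (c == e)) && ~~ seatd st c -> eligible st c /\ c != e.
  by rewrite negb_or /eligible => /andP [/andP [-> ->] ->].
constructor=> [|||i y|elig'_w i y|elig'_w i Lelim_i] /=.
- exact: bval_ge0 inv.
- exact: bval_le1 inv.
- move=> i y; case P: (pile st i) => [c|] //; case: ifP => ce; first by case/next_elig_mem.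
  by case=> <-; rewrite /eligible /= ce orbF; exact: (pile_eligible inv P).
- case P: (pile st i) => [c|] //; case: ifP => ce; first by case/next_elig_mem.
  by case=> <-; exact: (pile_mem inv P).
- have [elig_w neq_we] := elig_old w elig'_w.
  case P: (pile st i) => [c|] //; case: ifP => [/eqP eq_ce|_]; last first.
    by case=> <-; exact: (pile_before_w inv elig_w P).
  have lt_cw : (index c (ballot i) < index w (ballot i))%N.
    by apply: (pile_index_lt_w inv elig_w P); rewrite eq_ce eq_sym.
  by move/next_elig_first; apply=> //; exact: ballot_uniq.
- have [elig_w neq_we] := elig_old w elig'_w.
  have [-> pile_i] := Lelim_ballot_intact inv elig_w Lelim_i; split=> //.
  case P: (pile st i) pile_i => [c|//] _; case: ifP => [/eqP eq_ce|//].
  have lt_cw : (index c (ballot i) < index w (ballot i))%N.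
    by apply: (pile_index_lt_w inv elig_w P); rewrite eq_ce eq_sym.
  have /eqP/ohead_filter_Some [wb _ _] := Lelim_i.
  exact: next_elig_neq_None wb lt_cw elig'_w.
Qed.

Lemma stv_inv_reachable st : reachable B S st -> stv_inv st.
Proof.
elim=> [|s1 s2 _ inv1 step12]; first exact: stv_inv_init.
by case: s1 s2 / step12 inv1 => [s|s e] *; [exact: stv_inv_seat_round | exact: stv_inv_elim_round].
Qed.

End LElimBound.

Theorem lemma3 (C : finType) (B : seq (seq C)) (S : nat) (w : C) (O : {set C}) :
  valid_ballots B ->
  (forall o, o \in O -> (U_comp B o w < L_basic B w)%N) ->
  forall st : state B, reachable B S st -> can_be_eliminated B S st w ->
  ((L_elim B w O)%:R <= stv_tally B st w)%R.
Proof.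
move=> valid AG st reach_st [_ [_ [elig_w min_w]]].
have inv := stv_inv_reachable valid AG reach_st.
apply: (count_le_stv_tally (bval_ge0 inv)) => i Lelim_i.
have [bval_1 _] := Lelim_ballot_intact inv elig_w Lelim_i.
have [x pile_x [eq_xw|lt_xw]] := Lelim_ballot_pile AG inv elig_w Lelim_i.
  by rewrite pile_x eq_xw.
by have := min_w x (pile_eligible inv pile_x); rewrite leNgt lt_xw.
Qed.
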